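(* Let $G$ be a two-player game with a finite set $\mathcal{P}$ of positions as in the context, let $x$ be a Richman function for $G$, and let $T$ be the set defined from $x$ as in the context. If every position that is quiescent with respect to $x$ belongs to $T$, then every position belongs to $T$.
   Context: The game is given by a finite set $\mathcal{P}$ of positions; each non-terminal position $P$ has a nonempty set of White options $P_w$ and a nonempty set of Black options $P_b$. Terminal positions are designated as White wins or Black wins. A Richman function is a function $x:\mathcal{P}\to[0,1]$ with $x(P)=1$ at terminal White wins, $x(P)=0$ at terminal Black wins, and $x(P)=\frac12(\max_w x(P_w)+\min_b x(P_b))$ at every non-terminal $P$. A White move from $P$ to $P_w$ is $x$-greedy if $x(P_w)=\max_{w'}x(P_{w'})$. Let $T_0$ be the set of terminal positions, and for $n\ge0$ let $T_{n+1}$ consist of the positions that belong to $T_n$, or have an $x$-greedy White option in $T_n$, or have all of their Black options in $T_n$; let $T=\bigcup_n T_n$. A non-terminal position $P$ is quiescent with respect to $x$ if $\min_b x(P_b)=\max_w x(P_w)$. *)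

From mathcomp Require Import all_boot all_order all_algebra.
Set Implicit Arguments. Unset Strict Implicit. Unset Printing Implicit Defensive.
Import Order.TTheory GRing.Theory Num.Theory.
Local Open Scope ring_scope.

Section Game.
Variables (R : realFieldType) (P : finType).
(* term p : p is terminal; wwin p : (terminal) p is a White win.
   Wo p / Bo p : White / Black options of p (only meaningful for non-terminal p). *)
Variables (term wwin : pred P) (Wo Bo : P -> {set P}) (x : P -> R).

Definition is_maxval (A : {set P}) (v : R) : Prop :=
  (exists2 a, a \in A & x a = v) /\ (forall a, a \in A -> x a <= v).
Definition is_minval (A : {set P}) (v : R) : Prop :=
  (exists2 a, a \in A & x a = v) /\ (forall a, a \in A -> v <= x a).

Definition well_formed_game : Prop :=
  forall p, ~~ term p -> Wo p != set0 /\ Bo p != set0.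

Definition richman : Prop :=
  (forall p, 0 <= x p <= 1) /\
  (forall p, term p -> wwin p -> x p = 1) /\
  (forall p, term p -> ~~ wwin p -> x p = 0) /\
  (forall p, ~~ term p -> exists M m,
     is_maxval (Wo p) M /\ is_minval (Bo p) m /\ x p = (M + m) / 2).

Definition greedy (p w : P) : Prop := w \in Wo p /\ is_maxval (Wo p) (x w).

Fixpoint Tn (n : nat) (p : P) : Prop :=
  match n with
  | 0 => term p
  | n'.+1 => Tn n' p
             \/ (exists w, greedy p w /\ Tn n' w)
             \/ (forall b, b \in Bo p -> Tn n' b)
  end.

Definition inT (p : P) : Prop := exists n, Tn n p.

Definition quiescent (p : P) : Prop :=
  ~~ term p /\ exists v, is_minval (Bo p) v /\ is_maxval (Wo p) v.
End Game.

(* Among the positions outside T pick one, p, maximising x.  Then p is not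
   terminal; its x-greedy White option lies outside T (otherwise p would enter
   T), so max_w x(P_w) <= x(p); some Black option lies outside T (otherwise p
   would enter T), so min_b x(P_b) <= x(p).  As x(p) is the average of these two
   values, both equal x(p) and p is quiescent, hence in T: a contradiction. *)

From mathcomp Require Import all_boot all_order all_algebra.
From Stdlib Require Import Classical ClassicalEpsilon.
From mathcomp Require Import lra.

Set Implicit Arguments.
Unset Strict Implicit.
Unset Printing Implicit Defensive.
Import Order.TTheory GRing.Theory Num.Theory.
Local Open Scope ring_scope.

Lemma midpoint_ge_eq (R : realFieldType) (a b : R) :
  a <= (a + b) / 2 -> b <= (a + b) / 2 -> a = b.
Proof. by move=> ha hb; lra. Qed.

Lemma exists_maximizer (T : finType) (R : realFieldType) (f : T -> R)
    (Q : T -> Prop) (t0 : T) :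
  Q t0 -> exists2 t, Q t & forall u, Q u -> f u <= f t.
Proof.
pose q u := if excluded_middle_informative (Q u) then true else false.
have qP u : reflect (Q u) (q u).
  by rewrite /q; case: excluded_middle_informative => Qu; constructor.
move=> /qP qt0; case: (@arg_maxP _ _ _ t0 q f qt0) => t /qP Qt tmax.
by exists t => // u /qP /tmax.
Qed.

Section Game.
Variables (R : realFieldType) (P : finType).
Variables (term wwin : pred P) (Wo Bo : P -> {set P}) (x : P -> R).

Local Notation Tn := (Tn term Wo Bo x).
Local Notation inT := (inT term Wo Bo x).

Lemma Tn_le n m p : (n <= m)%N -> Tn n p -> Tn m p.
Proof. by move=> /subnK <-; elim: (m - n)%N => //= k IH /IH; left. Qed.

Lemma inT_uniform (s : seq P) :
  {in s, forall b, inT b} -> exists n, {in s, forall b, Tn n b}.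
Proof.
elim: s => [|a s IH] Hs; first by exists 0%N.
have [na Ha] := Hs a (mem_head _ _).
have [ns Hns] := IH (fun b bs => Hs b (mem_behead (s := a :: s) bs)).
exists (maxn na ns) => b; rewrite inE => /predU1P [-> | bs].
  exact: Tn_le (leq_maxl _ _) Ha.
exact: Tn_le (leq_maxr _ _) (Hns b bs).
Qed.

Lemma inT_term p : term p -> inT p.
Proof. by exists 0%N. Qed.

Lemma inT_greedy p w : greedy Wo x p w -> inT w -> inT p.
Proof. by move=> gw [n Hw]; exists n.+1; right; left; exists w. Qed.

Lemma inT_black p : {in Bo p, forall b, inT b} -> inT p.
Proof.
move=> HB; have [n Hn] : exists n, {in enum (Bo p), forall b, Tn n b}.
  by apply: inT_uniform => b; rewrite mem_enum => /HB.
by exists n.+1; right; right => b bB; apply: Hn; rewrite mem_enum.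
Qed.

Lemma maximal_notT_quiescent p :
  richman term wwin Wo Bo x -> ~ inT p ->
  (forall q, ~ inT q -> x q <= x p) -> quiescent term Wo Bo x p.
Proof.
move=> [_ [_ [_ rich]]] notTp pmax.
have nt : ~~ term p by apply/negP => /inT_term.
have [M [m [[[w wW xw] Mmax] [[[b bB xb] mmin] xp]]]] := rich p nt.
have greedy_w : greedy Wo x p w by do 2 split=> //; [exists w | rewrite xw].
have Mle : M <= x p by rewrite -xw; apply/pmax => /(inT_greedy greedy_w).
have [b' b'B notTb'] : exists2 b', b' \in Bo p & ~ inT b'.
  apply: NNPP => noB; apply/notTp/inT_black => c cB.
  by apply: NNPP => notTc; apply: noB; exists c.
have mle : m <= x p by apply: le_trans (mmin _ b'B) (pmax _ notTb').
have eMm : M = m by apply: midpoint_ge_eq; rewrite -xp.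
split=> //; exists M; split; last by split=> //; exists w.
by rewrite eMm; split=> //; exists b.
Qed.

End Game.

Theorem proposition3 (R : realFieldType) (P : finType)
    (term wwin : pred P) (Wo Bo : P -> {set P}) (x : P -> R) :
  well_formed_game term Wo Bo ->
  richman term wwin Wo Bo x ->
  (forall p, quiescent term Wo Bo x p -> inT term Wo Bo x p) ->
  forall p, inT term Wo Bo x p.
Proof.
move=> _ rich quiescent_inT p; apply: NNPP => notTp.
have [q notTq qmax] :=
  exists_maximizer x (Q := fun q => ~ inT term Wo Bo x q) notTp.
exact/notTq/quiescent_inT/(maximal_notT_quiescent rich notTq qmax).
Qed.
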